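(* Let $k\ge 2$ and $s\ge 1$ be integers, and let $r_1,\ldots,r_s$ be integers with $0\le r_i\le k$ and $r_i\ne 1$ for each $i\in\{1,\ldots,s\}$. Let $D$ be a strongly connected digraph such that every (directed) cycle of $D$ has length congruent to $r$ modulo $k$ for some $r\in\{r_1,\ldots,r_s\}$. Then $\chi_A(D)\le 2s+1$.
   Context: Digraphs are finite and loopless; paths and cycles are directed. A set of vertices of a digraph $D$ is acyclic if the subdigraph it induces contains no directed cycle. The dichromatic number $\chi_A(D)$ is the minimum $k$ such that $V(D)$ can be colored with $k$ colors so that every color class is acyclic. A digraph is strongly connected if for every ordered pair of distinct vertices $u,v$ there is a directed $uv$-path. *)

From mathcomp Require Import all_boot.
Set Implicit Arguments. Unset Strict Implicit. Unset Printing Implicit Defensive.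

Definition loopless (V : finType) (e : rel V) : Prop := forall v, ~~ e v v.

Definition dcycle (V : finType) (e : rel V) (c : seq V) : Prop :=
  [/\ c != [::], uniq c & cycle e c].

Definition acyclic_set (V : finType) (e : rel V) (A : {pred V}) : Prop :=
  forall c : seq V, dcycle e c -> ~ all (mem A) c.

Definition strongly_connected (V : finType) (e : rel V) : Prop :=
  forall u v : V, connect e u v.

Definition dichromatic_le (V : finType) (e : rel V) (m : nat) : Prop :=
  exists f : V -> 'I_m, forall i : 'I_m, acyclic_set e [pred v | f v == i].

From mathcomp Require Import all_boot ssralg zmodp zify.
Set Implicit Arguments. Unset Strict Implicit. Unset Printing Implicit Defensive.
Import GRing.Theory.

(* Label the vertices along a depth-first search forest: [p v] is the depth of [v] and
   [f v] its finishing time.  Every arc [u -> v] either enters a vertex finished earlier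
   ([f v < f u]) or is a back arc to an ancestor, closing with the tree path from [v] to [u]
   a cycle of length [p u - p v + 1].  Colour [v] by [g (p v mod k)], where [g] properly
   colours the circulant digraph on Z_k with steps [k - r_i + 1]; these steps are nonzero
   because [r_i <> 1], so the circulant is loopless of degree at most [2s] and [2s + 1]
   colours suffice greedily.  A cycle cannot decrease [f] along all its arcs, so a
   monochromatic cycle contains a back arc [u -> v]; its cycle has length [= r_j (mod k)],
   whence [p v = p u + (k - r_j + 1) (mod k)] and [u], [v] have different colours. *)

Section GreedyColouring.
Variables (T : finType) (adj : rel T) (m : nat).
Hypotheses (m_gt0 : 0 < m) (adj_irr : forall a, ~~ adj a a).
Hypothesis deg_lt : forall a, #|[set b | adj a b || adj b a]| < m.

Lemma greedy_colouring_seq (s : seq T) :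
  exists g : T -> 'I_m, {in s &, forall a b, adj a b -> g a != g b}.
Proof.
elim: s => [|x s [g gP]]; first by exists (fun=> Ordinal m_gt0).
pose used := g @: [set b | adj x b || adj b x].
have [c c_free] : exists c, c \notin used.
  have : 0 < #|~: used|.
    rewrite -(ltn_add2l #|used|) addn0 cardsC card_ord.
    exact: leq_ltn_trans (leq_imset_card _ _) (deg_lt x).
  by case/card_gt0P=> c; rewrite inE; exists c.
exists (fun y => if y == x then c else g y) => a b; rewrite !in_cons.
have [->|ax] := eqVneq a x => /= aS; have [->|bx] := eqVneq b x => /= bS ab.
- by have := adj_irr x; rewrite ab.
- by apply: contraNneq c_free => ->; apply: imset_f; rewrite inE ab.
- by rewrite eq_sym; apply: contraNneq c_free => ->; apply: imset_f; rewrite inE ab orbT.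
- exact: gP.
Qed.

Lemma greedy_colouring : exists g : T -> 'I_m, forall a b, adj a b -> g a != g b.
Proof.
have [g gP] := greedy_colouring_seq (enum T).
by exists g => a b; apply: gP; rewrite mem_enum.
Qed.

End GreedyColouring.

Lemma circulant_colouring (k s : nat) (t : 'I_s -> nat) :
  1 < k -> (forall i, t i %% k != 0) ->
  exists g : nat -> 'I_(2 * s + 1), forall i a b, b = a + t i %[mod k] -> g a != g b.
Proof.
move=> k_gt1 t_neq0.
pose step i : 'Z_k := ((t i)%:R)%R.
pose adj : rel 'Z_k := fun a b => [exists i, b == a + step i]%R.
have adj_irr a : ~~ adj a a.
  apply/existsP => -[i /eqP aE].
  have step0 : step i = 0%R by apply: (addrI a); rewrite addr0 -aE.
  by move: (t_neq0 i); rewrite -val_Zp_nat // -/(step i) step0.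
have deg_lt a : #|[set b | adj a b || adj b a]| < 2 * s + 1.
  rewrite addn1 ltnS mul2n -addnn.
  pose out_nb := [set (a + step i)%R | i : 'I_s].
  pose in_nb := [set (a - step i)%R | i : 'I_s].
  apply: (@leq_trans #|out_nb :|: in_nb|).
    apply/subset_leq_card/subsetP => b; rewrite !inE => /orP[] /existsP[i /eqP bE].
      by apply/orP; left; apply/imsetP; exists i.
    by apply/orP; right; apply/imsetP; exists i; rewrite // bE addrK.
  apply: leq_trans (leq_card_setU _ _) _.
  by apply: leq_add; apply: leq_trans (leq_imset_card _ _) _; rewrite card_ord.
have [g gP] := greedy_colouring (leq_addl _ _) adj_irr deg_lt.
exists (fun n => g (n%:R)%R) => i a b abE; apply: gP; apply/existsP; exists i.
by apply/eqP/val_inj; rewrite /step -natrD /= !val_Zp_nat.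
Qed.

Lemma cycle_not_descending (T : eqType) (e : rel T) (f : T -> nat) c :
  c != [::] -> cycle e c -> ~ {in c &, forall u v, e u v -> f v < f u}.
Proof.
case: c => [|x c] // _ cyc desc.
have : path [rel u v | f v < f u] x (rcons c x).
  apply: (sub_in_path (P := mem (x :: c))) cyc; first exact: desc.
  by apply/allP => w; rewrite in_cons mem_rcons in_cons orbA orbb.
have lt_trans : transitive [rel u v | f v < f u].
  by move=> a b d /= ab bd; apply: ltn_trans bd ab.
move=> desc_path; have /allP/(_ x) := order_path_min lt_trans desc_path.
by rewrite mem_rcons mem_head /= ltnn => /(_ isT).
Qed.

Lemma back_step_neq0 k r : 1 < k -> r <= k -> r <> 1 -> (k - r).+1 %% k != 0.
Proof.
move=> k_gt1 rk r_neq1; have [->|r_gt0] := posnP r.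
  by rewrite subn0 -addn1 modnDl modn_small.
by rewrite modn_small; lia.
Qed.

Lemma modn_back_arc a b L r k :
  a + L = b -> L.+1 = r %[mod k] -> r <= k -> a = b + (k - r).+1 %[mod k].
Proof.
move=> <- L_r rk.
rewrite -addnA addnS -addSn -modnDmr -(modnDml L.+1) L_r modnDml.
by rewrite subnKC // modnn addn0.
Qed.

Section DepthFirstLabelling.
Variables (V : finType) (e : rel V).
Implicit Types (S R : {set V}) (a b r u v : V) (s : seq V).

Definition induced (S : {set V}) : rel V := [rel a b | [&& a \in S, b \in S & e a b]].

Definition simple_path_in (S : {set V}) (a b : V) (L : nat) :=
  exists s,
    [/\ path e a s, last a s = b, uniq (a :: s), {subset a :: s <= S} & size s = L].

(* [p] is the depth and [f] the finishing time of a depth-first search forest of [S]. *)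
Definition descending_or_back (S : {set V}) (p f : V -> nat) :=
  forall u v, u \in S -> v \in S -> e u v ->
  f v < f u \/ exists L, simple_path_in S v u L /\ p u = p v + L.

(* Every vertex reachable from a [Q]-vertex hangs, at depth [p u], below a [Q]-root of
   depth 0; [Q] lets the subtrees below a vertex [x] be rooted at out-neighbours of [x]. *)
Definition tree_paths (S : {set V}) (Q : pred V) (p : V -> nat) :=
  forall u, u \in S -> (exists r, [/\ r \in S, Q r & connect (induced S) r u]) ->
  exists r, [/\ r \in S, Q r, p r = 0 & simple_path_in S r u (p u)].

Lemma simple_path_in0 S a : a \in S -> simple_path_in S a a 0.
Proof. by move=> aS; exists [::]; split=> // w; rewrite inE => /eqP->. Qed.

Lemma simple_path_inS S S' a b L :
  S \subset S' -> simple_path_in S a b L -> simple_path_in S' a b L.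
Proof. by move=> /subsetP sSS' [s [? ? ? sS ?]]; exists s; split=> // w /sS/sSS'. Qed.

Lemma simple_path_in_cons S S' x a b L :
  x \in S' -> x \notin S -> S \subset S' -> e x a ->
  simple_path_in S a b L -> simple_path_in S' x b L.+1.
Proof.
move=> xS' xS /subsetP sSS' exa [s [sP sL sU sS sz]]; exists (a :: s); split=> //.
- by rewrite /= exa.
- by rewrite cons_uniq sU andbT; apply: contra xS => /sS.
- by move=> w; rewrite inE => /predU1P[->|/sS/sSS'].
- by rewrite /= sz.
Qed.

Lemma induced_path_sub S a s : path (induced S) a s -> all (mem S) s.
Proof. by elim: s a => //= b s IH a /andP[/and3P[_ -> _] /IH]. Qed.

Lemma induced_pathS S S' a s :
  all (mem S') (a :: s) -> path (induced S) a s -> path (induced S') a s.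
Proof. by apply: sub_in_path => b c bS' cS' /and3P[_ _ ebc]; apply/and3P. Qed.

Lemma induced_path_setD S R r s :
  (forall a b, a \in R -> induced S a b -> b \in R) ->
  r \in S -> path (induced S) r s -> last r s \notin R ->
  all (mem (S :\: R)) (r :: s).
Proof.
move=> R_closed; elim: s r => [|b s IH] r rS /=.
  by rewrite !inE rS andbT => _ ->.
move=> /andP[rb bs] sR; have bS : b \in S by case/and3P: rb.
have /= /andP[bSR ->] := IH b bS bs sR; rewrite bSR !inE rS !andbT.
by apply: contraTN bSR => /R_closed/(_ rb) bR; rewrite inE bR.
Qed.

(* One step of the search, started at [x]: the set [R] of vertices reached from [x] is
   explored first, its tree hanging off [x], and [S :\: R] is searched afterwards, hence
   finished later. *)
Section Extension.
Variables (S : {set V}) (Q : pred V) (x : V).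
Hypotheses (xS : x \in S) (xQ : Q x \/ {in S, forall y, ~~ Q y}).
Local Notation R := [set y in S | connect (induced S) x y].
Variables (p1 f1 p2 f2 : V -> nat).
Hypotheses (dfs1 : descending_or_back (S :\: R) p1 f1) (tree1 : tree_paths (S :\: R) Q p1).
Hypotheses (dfs2 : descending_or_back (R :\ x) p2 f2).
Hypothesis tree2 : tree_paths (R :\ x) (e x) p2.

Lemma reach_closed a b : a \in R -> induced S a b -> b \in R.
Proof.
rewrite !inE => /andP[_ xa] ab.
have bS : b \in S by case/and3P: ab.
by rewrite bS (connect_trans xa (connect1 ab)).
Qed.

Lemma reach_sub : R \subset S.
Proof. by apply/subsetP => y; rewrite inE => /andP[]. Qed.

Lemma reach_out_neighbour u : u \in R :\ x ->
  exists r, [/\ r \in R :\ x, e x r & connect (induced (R :\ x)) r u].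
Proof.
rewrite !inE => /and3P[ux _ /connectP[s0 s0P u_last]].
case/shortenP: s0P u_last => -[|r s] xrsP xrsU _ u_last.
  by rewrite u_last eqxx in ux.
have xsP := xrsP; move: xrsP => /= /andP[xr rsP].
have rs_reach : all (mem (R :\ x)) (r :: s).
  apply/allP => w ws; rewrite !inE.
  have -> : w != x by apply: contraTneq xrsU => <-; rewrite cons_uniq ws.
  have wS : w \in S := allP (induced_path_sub xsP) w ws.
  by rewrite wS (path_connect xsP) // inE ws orbT.
exists r; split; [by case/andP: rs_reach | by case/and3P: xr |].
by apply/connectP; exists s; [apply: induced_pathS rs_reach rsP | rewrite u_last].
Qed.

Lemma path_from_root u : u \in R :\ x -> simple_path_in S x u (p2 u).+1.
Proof.
move=> uR; have [r [_ xr _ ru]] := tree2 uR (reach_out_neighbour uR).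
apply: simple_path_in_cons ru => //; first by rewrite !inE eqxx.
exact: subset_trans (subD1set _ _) reach_sub.
Qed.

Let N := (\max_(w : V) f2 w).+1.
Let p y := if y \in S :\: R then p1 y else if y == x then 0 else (p2 y).+1.
Let f y := if y \in S :\: R then f1 y + N.+1 else if y == x then N else f2 y.

Lemma not_setD_reach u : u \in S -> u \notin S :\: R -> u \in R.
Proof. by move=> uS; rewrite in_setD uS andbT negbK. Qed.

Lemma extension_descending : descending_or_back S p f.
Proof.
have f2_lt w : f2 w < N by rewrite ltnS leq_bigmax.
move=> u v uS vS euv; rewrite /p /f.
have [uS1|uS1] := boolP (u \in S :\: R); have [vS1|vS1] := boolP (v \in S :\: R).
- case: (dfs1 uS1 vS1 euv) => [fvu|[L [Lpath ->]]]; first by left; rewrite ltn_add2r.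
  by right; exists L; split=> //; apply: simple_path_inS Lpath; apply: subsetDl.
- left; rewrite addnS ltnS; apply: leq_trans (leq_addl (f1 u) N).
  by case: eqP => // _; apply: ltnW.
- by move: vS1; rewrite in_setD (reach_closed (not_setD_reach uS uS1)) //; apply/and3P.
have uR := not_setD_reach uS uS1; have vR := not_setD_reach vS vS1.
have [ux|ux] := eqVneq u x; have [vx|vx] := eqVneq v x.
- by right; exists 0; rewrite ux vx; split; [apply: simple_path_in0 | rewrite addn0].
- by left.
- right; exists (p2 u).+1; split=> //.
  by rewrite vx; apply: path_from_root; rewrite in_setD1 ux.
have uR' : u \in R :\ x by rewrite in_setD1 ux.
have vR' : v \in R :\ x by rewrite in_setD1 vx.
case: (dfs2 uR' vR' euv) => [|[L [Lpath ->]]]; first by left.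
right; exists L; split=> //; apply: simple_path_inS Lpath.
exact: subset_trans (subD1set _ _) reach_sub.
Qed.

Lemma extension_tree : tree_paths S Q p.
Proof.
move=> u uS [r [rS rQ /connectP[s rsP u_last]]].
have [uS1|uS1] := boolP (u \in S :\: R).
  have rsS1 : all (mem (S :\: R)) (r :: s).
    apply: induced_path_setD rS rsP _ => [a b|]; first exact: reach_closed.
    by rewrite -u_last; move: uS1; rewrite in_setD => /andP[].
  have r_root : exists r, [/\ r \in S :\: R, Q r & connect (induced (S :\: R)) r u].
    exists r; split=> //; first by case/andP: rsS1.
    by apply/connectP; exists s => //; apply: induced_pathS rsS1 rsP.
  have [r' [r'S1 r'Q pr' r'u]] := tree1 uS1 r_root.
  exists r'; rewrite /p r'S1 uS1; split=> //.
    by move: r'S1; rewrite in_setD => /andP[].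
  by apply: simple_path_inS r'u; apply: subsetDl.
have Qx : Q x by case: xQ => // noQ; have := noQ r rS; rewrite rQ.
have xS1 : x \notin S :\: R by rewrite in_setD inE xS connect0.
exists x; rewrite /p (negbTE xS1) (negbTE uS1) (eqxx x); split=> //.
have [->|ux] := eqVneq u x; first exact: simple_path_in0.
by apply: path_from_root; rewrite in_setD1 ux not_setD_reach.
Qed.

Lemma extension_labelling : exists p f, descending_or_back S p f /\ tree_paths S Q p.
Proof. by exists p, f; split; [apply: extension_descending | apply: extension_tree]. Qed.
End Extension.

Lemma depth_first_labelling S Q :
  exists p f, descending_or_back S p f /\ tree_paths S Q p.
Proof.
have [n] := ubnP #|S|; elim: n S Q => // n IH S Q /ltnSE S_le.
have [S0|[y yS]] := set_0Vmem S.
  by exists (fun=> 0), (fun=> 0); split=> u; rewrite S0 inE.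
have [x [xS xQ]] : exists x, x \in S /\ (Q x \/ {in S, forall z, ~~ Q z}).
  case: (pickP [pred z in S | Q z]) => [z /andP[zS zQ]|noQ].
    by exists z; split; [|left].
  by exists y; split=> //; right=> z zS; move: (noQ z); rewrite /= zS /= => ->.
have smaller (T : {set V}) : T \subset S :\ x -> #|T| < n.
  move=> TS; apply: leq_ltn_trans (subset_leq_card TS) _.
  exact: leq_trans (proper_card (properD1 xS)) S_le.
pose R := [set z in S | connect (induced S) x z].
have S1_small : #|S :\: R| < n.
  by apply: smaller; apply: setDS; rewrite sub1set inE xS connect0.
have R'_small : #|R :\ x| < n by apply: smaller; apply: setSD; apply: reach_sub.
have [p1 [f1 [dfs1 tree1]]] := IH _ Q S1_small.
have [p2 [f2 [dfs2 tree2]]] := IH _ (e x) R'_small.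
exact: (extension_labelling xS xQ dfs1 tree1 dfs2 tree2).
Qed.
End DepthFirstLabelling.

Theorem theorem1 (k s : nat) (r : 'I_s -> nat)
  (V : finType) (e : rel V) :
  2 <= k -> 1 <= s ->
  (forall i : 'I_s, r i <= k /\ r i <> 1) ->
  loopless e ->
  strongly_connected e ->
  (forall c : seq V, dcycle e c -> exists i : 'I_s, size c = r i %[mod k]) ->
  dichromatic_le e (2 * s + 1).
Proof.
move=> k_gt1 _ r_ok _ _ cycle_len.
pose t i := (k - r i).+1.
have [g gP] := @circulant_colouring _ _ t k_gt1
  (fun i => back_step_neq0 k_gt1 (r_ok i).1 (r_ok i).2).
have [p [f [dfs _]]] := depth_first_labelling e [set: V] xpred0.
exists (fun v => g (p v)) => i c [c_nil _ c_cycle] c_mono.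
apply: (cycle_not_descending (f := f) c_nil c_cycle) => u v uc vc euv.
have [//|[L [[sp [spP sp_last sp_uniq _ sp_size]] puv]]] :=
  dfs u v (in_setT u) (in_setT v) euv.
have [j L_r] : exists j, L.+1 = r j %[mod k].
  rewrite -sp_size; apply: (cycle_len (v :: sp)).
  by split=> //; rewrite /cycle rcons_path spP sp_last euv.
have := gP j _ _ (modn_back_arc (esym puv) L_r (r_ok j).1).
by rewrite (eqP (allP c_mono u uc)) (eqP (allP c_mono v vc)) eqxx.
Qed.
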